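(* Let $k,c$ be integers with $1<c<k$. Then $N(ck+c-k,k)=\gcd(c,k)$.
   Context: For $n>k\ge1$, $N(n,k)$ is the nullity of the $n\times n$ skew-symmetric Toeplitz matrix $A(n,k)$ whose first $k$ superdiagonals have all entries $1$ and whose remaining superdiagonals have all entries $0$. *)

From mathcomp Require Import all_boot all_order all_algebra.
Set Implicit Arguments. Unset Strict Implicit. Unset Printing Implicit Defensive.
Import GRing.Theory Num.Theory.
Local Open Scope ring_scope.

Definition Amat (n k : nat) : 'M[rat]_n :=
  \matrix_(i < n, j < n)
    (if (i < j)%N && (j - i <= k)%N then 1
     else if (j < i)%N && (i - j <= k)%N then -1 else 0).

Definition N (n k : nat) : nat := (n - \rank (Amat n k))%N.

(* Read a row vector u of length n as a polynomial u(X) of degree < n.  Then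
   (u A(n,k))_j is the coefficient of X^(j+k) in u(X) T(X), where
   T = (X^(k+1) - 1) [k] and [m] = 1 + X + ... + X^(m-1).  For n = ck + c - k,
   put S = 1 + X^(k+1) + ... + X^((k+1)(c-1)), of degree n - 1, so that
   (X^(k+1) - 1) S = X^(n+k) - 1: the vanishing of the coefficients of u T in
   degrees k .. n+k-1 then says exactly that S divides u [k].  Modulo [k] we
   have S = [c], and a Bezout relation between c and k shows that
   S | u [k] iff K | u, where K = S / [g] and g = gcd(c, k).  The multiples of
   K of degree < n form a space of dimension n - deg K = g. *)

From mathcomp Require Import all_boot all_order all_algebra.
From mathcomp Require Import zify ring.
Set Implicit Arguments.
Unset Strict Implicit.
Unset Printing Implicit Defensive.
Import GRing.Theory Num.Theory.
Local Open Scope ring_scope.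

Section GeometricPolynomials.

Variable F : fieldType.
Implicit Types (p : {poly F}) (a b c d k m : nat).

Definition geom p n : {poly F} := \sum_(i < n) p ^+ i.

Lemma mul_subr1_geom p n : (p - 1) * geom p n = p ^+ n - 1.
Proof. by rewrite subrX1. Qed.

Lemma Xsub1_neq0 : 'X - 1 != 0 :> {poly F}.
Proof. by rewrite -size_poly_eq0 size_XsubC. Qed.

Lemma Xnsub1_neq0 a : (0 < a)%N -> 'X^a - 1 != 0 :> {poly F}.
Proof. by move=> a_gt0; rewrite -size_poly_eq0 -polyC1 size_XnsubC. Qed.

Lemma geomX_poly a : geom 'X a = \poly_(i < a) 1.
Proof. by rewrite poly_def; apply: eq_bigr => i _; rewrite scale1r. Qed.

Lemma size_geomX a : size (geom 'X a) = a.
Proof.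
case: a => [|a]; first by rewrite /geom big_ord0 size_poly0.
by rewrite geomX_poly size_poly_eq ?oner_eq0.
Qed.

Lemma geomX_eq0 a : (geom 'X a == 0) = (a == 0).
Proof. by rewrite -size_poly_eq0 size_geomX. Qed.

Lemma geomX_mul a b : geom 'X a * geom 'X^a b = geom 'X (a * b).
Proof.
apply: (mulfI Xsub1_neq0); rewrite mulrA !mul_subr1_geom -exprM.
by rewrite -mul_subr1_geom; congr (_ * _); apply: eq_bigr => i _; rewrite exprM.
Qed.

Lemma size_geomXn a b : (0 < a)%N -> size (geom 'X^a b.+1) = (a * b).+1.
Proof.
move=> a_gt0; have ab_gt0 : (0 < a * b.+1)%N by rewrite muln_gt0 a_gt0.
have := mul_subr1_geom 'X^a b.+1; rewrite -exprM => prodE.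
have G_neq0 : geom 'X^a b.+1 != 0.
  by apply/eqP => G0; move: (Xnsub1_neq0 ab_gt0); rewrite -prodE G0 mulr0 eqxx.
move: (congr1 (size : {poly F} -> nat) prodE).
rewrite size_mul ?Xnsub1_neq0 // -!polyC1 !size_XnsubC //.
by move: (size _) => s; rewrite mulnS; lia.
Qed.

Lemma size_geomXnS k c : (0 < c)%N ->
  size (geom 'X^(k.+1) c) = (c * k + c - k)%N.
Proof. by case: c => // c _; rewrite size_geomXn //; nia. Qed.

Lemma dvdp_Xnsub1 a b : ('X^a - 1 : {poly F}) %| 'X^(a * b) - 1.
Proof. by rewrite exprM -(mul_subr1_geom 'X^a) dvdp_mulIl. Qed.

Lemma dvdp_geomX_Xnsub1 d m : (d %| m)%N -> geom 'X d %| 'X^m - 1.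
Proof.
move=> /dvdnP[q ->]; apply: (@dvdp_trans _ ('X^d - 1)).
  by rewrite -mul_subr1_geom dvdp_mull.
by rewrite mulnC dvdp_Xnsub1.
Qed.

Lemma dvdp_geomX_geomXnS_sub d a c : (d %| a)%N ->
  geom 'X d %| geom 'X^(a.+1) c - geom 'X c.
Proof.
move=> dvd_da; rewrite /geom -sumrB.
apply: (big_ind (fun p => geom 'X d %| p)) => [||t _]; first exact: dvdp0.
  exact: dvdp_add.
rewrite -exprM mulSn exprD mulrC -{2}['X^t]mul1r -mulrBl dvdp_mulr //.
by apply: dvdp_geomX_Xnsub1; apply: dvdn_mulr.
Qed.

Lemma dvdp_geomX_geomXnS d a c : (d %| c)%N -> (d %| a)%N ->
  geom 'X d %| geom 'X^(a.+1) c.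
Proof.
move=> dvd_dc dvd_da; rewrite -(subrK (geom 'X c) (geom _ c)).
apply: dvdp_add; first exact: dvdp_geomX_geomXnS_sub.
by rewrite -(divnK dvd_dc) mulnC -geomX_mul dvdp_mulIl.
Qed.

Lemma dvdp_Xnsub1_gcd k c p : (0 < k)%N ->
  'X^k - 1 %| ('X^c - 1) * p -> 'X^k - 1 %| ('X^(gcdn c k) - 1) * p.
Proof.
move=> k_gt0 dvd_cp; have [a _ dvd_k] := Bezoutr c k_gt0.
set g := gcdn c k in dvd_k *; set b := ((g + a * c) %/ k)%N.
have kbE : (k * b = g + c * a)%N by rewrite /b mulnC divnK // mulnC.
have -> : ('X^g - 1) * p = ('X^(k * b) - 1) * p - 'X^g * (('X^(c * a) - 1) * p).
  by rewrite kbE exprD; ring.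
apply: dvdp_sub; first by rewrite dvdp_mulr // dvdp_Xnsub1.
by rewrite dvdp_mull // (dvdp_trans dvd_cp) // dvdp_mul ?dvdp_Xnsub1.
Qed.

End GeometricPolynomials.

Lemma poly_take_drop_gap (R : nzRingType) (p : {poly R}) a b : (a <= b)%N ->
  (forall i, (a <= i < b)%N -> p`_i = 0) ->
  p = take_poly a p + drop_poly b p * 'X^b.
Proof.
move=> le_ab gap0; rewrite -[LHS](poly_take_drop b); congr (_ + _).
apply/polyP => i; rewrite !coef_take_poly.
case: (ltnP i a) => [lt_ia | le_ai]; first by rewrite (leq_trans lt_ia le_ab).
by case: ltnP => // lt_ib; rewrite gap0 ?le_ai.
Qed.

Section KernelGenerator.

Variables (F : fieldType) (k c : nat).
Hypothesis k_gt0 : (0 < k)%N.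
Implicit Types X : {poly F}.

Let g := gcdn c k.

Definition ker_poly : {poly F} := geom 'X^(k.+1) c %/ geom 'X g.

Lemma geomXnS_ker_poly : geom 'X^(k.+1) c = ker_poly * geom 'X g.
Proof. by rewrite divpK // dvdp_geomX_geomXnS ?dvdn_gcdl ?dvdn_gcdr. Qed.

Let g_gt0 : (0 < g)%N. Proof. by rewrite gcdn_gt0 k_gt0 orbT. Qed.

Lemma size_ker_poly : (0 < c)%N -> size ker_poly = (c * k + c - k - g.-1)%N.
Proof.
by move=> c_gt0; rewrite size_divp ?geomX_eq0 -?lt0n // size_geomXnS // size_geomX.
Qed.

Let Q : {poly F} := geom 'X^g (k %/ g).

Let geomX_gcd_mul : geom 'X k = geom 'X g * Q.
Proof. by rewrite /Q geomX_mul mulnC divnK ?dvdn_gcdr. Qed.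

Lemma dvdp_geomXnS_mulE X :
  (geom 'X^(k.+1) c %| X * geom 'X k) = (ker_poly %| X).
Proof.
have Eg_neq0 : geom 'X g != 0 :> {poly F} by rewrite geomX_eq0 -lt0n.
apply/idP/idP => [/dvdpP[H XEk] | /dvdpP[R ->]]; last first.
  rewrite geomX_gcd_mul (_ : _ * _ = R * Q * (ker_poly * geom 'X g)); last by ring.
  by rewrite -geomXnS_ker_poly dvdp_mull.
have dvd_kH : geom 'X k %| geom 'X c * H.
  set S := geom _ c in XEk *.
  have -> : geom 'X c * H = H * S - (S - geom 'X c) * H by ring.
  apply: dvdp_sub; first by rewrite -XEk dvdp_mull.
  by rewrite dvdp_mulr ?dvdp_geomX_geomXnS_sub.
have : 'X^k - 1 %| ('X^g - 1) * H.
  apply: dvdp_Xnsub1_gcd k_gt0 _.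
  by rewrite -!mul_subr1_geom -mulrA dvdp_mul2l ?Xsub1_neq0.
rewrite -!mul_subr1_geom -mulrA dvdp_mul2l ?Xsub1_neq0 //.
rewrite geomX_gcd_mul dvdp_mul2l // => /dvdpP[R HE].
apply/dvdpP; exists R; apply: (@mulIf _ (geom 'X k)); first by rewrite geomX_eq0 -lt0n.
by rewrite XEk HE geomXnS_ker_poly geomX_gcd_mul; ring.
Qed.

End KernelGenerator.

Section ToeplitzSymbol.

Variables (F : fieldType) (k : nat).

Definition toeplitz_symbol : {poly F} := ('X^(k.+1) - 1) * geom 'X k.

Lemma coef_toeplitz_symbol e : toeplitz_symbol`_e =
  if (k < e <= k.*2)%N then 1 else if (e < k)%N then -1 else 0.
Proof.
rewrite /toeplitz_symbol mulrBl mul1r coefB coefXnM geomX_poly !coef_poly.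
case: (ltnP e k) => h1; case: (ltnP e k.+1) => h2; case: (ltnP k e) => h3;
  case: (leqP e k.*2) => h4; case: (ltnP (e - k.+1) k) => h5;
  rewrite /= ?subr0 ?sub0r //; lia.
Qed.

Lemma size_toeplitz_symbol : (size toeplitz_symbol <= k.*2.+1)%N.
Proof.
apply: leq_trans (size_polyMleq _ _) _.
by rewrite -polyC1 size_XnsubC // size_geomX -addnn.
Qed.

Variables (c : nat).
Hypothesis c_gt0 : (0 < c)%N.
Implicit Types X : {poly F}.

Let n := (c * k + c - k)%N.
Let nkE : (n + k = k.+1 * c)%N. Proof. rewrite /n; nia. Qed.

Let S_size : size (geom 'X^(k.+1) c : {poly F}) = n.
Proof. exact: size_geomXnS. Qed.

Lemma toeplitz_window_dvdp X : (size X <= n)%N ->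
  (forall j, (j < n)%N -> (X * toeplitz_symbol)`_(j + k) = 0) ->
  geom 'X^(k.+1) c %| X * geom 'X k.
Proof.
move=> X_size window0; set Y := X * toeplitz_symbol.
have Y_size : (size Y <= n + k.*2)%N.
  apply: leq_trans (size_polyMleq _ _) _.
  by move: size_toeplitz_symbol; move: (size _) (size _) X_size => sT sX; lia.
set L := take_poly k Y; set H := drop_poly (n + k) Y.
have YE : Y = L + H * 'X^(n + k).
  apply: poly_take_drop_gap => [|i /andP[le_ki lt_i]]; first exact: leq_addl.
  by rewrite -(subnK le_ki) window0 //; lia.
(* X^(k+1) - 1 divides Y and X^(n+k) - 1, hence L + H, which is too short not to vanish. *)
have LH_size : (size (L + H)%R <= k)%N.
  apply: leq_trans (size_polyD _ _) _; rewrite geq_max size_take_poly size_drop_poly.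
  by move: Y_size; move: (size Y) => sY; rewrite -addnn; lia.
have dvd_LH : 'X^(k.+1) - 1 %| L + H.
  have -> : L + H = Y - H * ('X^(n + k) - 1) by rewrite YE; ring.
  apply: dvdp_sub; first by rewrite /Y /toeplitz_symbol mulrCA dvdp_mulIl.
  by rewrite nkE dvdp_mull ?dvdp_Xnsub1.
have LH0 : L + H = 0.
  apply: contraTeq dvd_LH => LH_neq0; apply/negP => /(dvdp_leq LH_neq0).
  by rewrite -polyC1 size_XnsubC // ltnNge (leq_trans LH_size (leqnSn k)).
apply/dvdpP; exists H; apply: (@mulfI _ ('X^(k.+1) - 1)); first exact: Xnsub1_neq0.
rewrite mulrCA -/toeplitz_symbol -/Y YE (_ : L = - H); last first.
  by apply/eqP; rewrite -addr_eq0 LH0.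
by rewrite [RHS]mulrCA mul_subr1_geom nkE exprM; ring.
Qed.

Lemma dvdp_toeplitz_window X : (size X <= n)%N ->
  geom 'X^(k.+1) c %| X * geom 'X k ->
  forall j, (j < n)%N -> (X * toeplitz_symbol)`_(j + k) = 0.
Proof.
move=> X_size /dvdpP[H XEk] j lt_jn.
have S_neq0 : geom 'X^(k.+1) c != 0 :> {poly F}.
  by rewrite -size_poly_eq0 S_size /n; nia.
have YE : X * toeplitz_symbol = H * ('X^(n + k) - 1).
  by rewrite nkE exprM -mul_subr1_geom /toeplitz_symbol mulrCA XEk; ring.
rewrite YE mulrBr mulr1 coefB coefMXn ifT; last lia.
have [-> | H_neq0] := eqVneq H 0; first by rewrite coef0 subr0.
have H_size : (size H <= j + k)%N.
  have := size_polyMleq X (geom 'X k).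
  rewrite XEk size_mul // S_size size_geomX.
  by move: (size H) (size X) X_size => sH sX; lia.
by rewrite (leq_sizeP _ _ H_size) ?subr0.
Qed.

End ToeplitzSymbol.

Arguments toeplitz_symbol {F} k.
Arguments ker_poly {F} k c.

Lemma size_rVpoly (R : nzSemiRingType) m (v : 'rV[R]_m) : (size (rVpoly v) <= m)%N.
Proof. exact: size_poly. Qed.

Lemma mulmx_Amat_coef n k (u : 'rV[rat]_n) (j : 'I_n) :
  (u *m Amat n k) 0 j = (rVpoly u * toeplitz_symbol k)`_(j + k).
Proof.
rewrite {2}(row_sum_delta u) linear_sum mulr_suml coef_sum mxE.
apply: eq_bigr => i _; rewrite linearZ /= rVpoly_delta -scalerAl coefZ coefXnM.
congr (_ * _); rewrite mxE coef_toeplitz_symbol.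
case: (ltnP i j) => h1; case: (leqP (j - i) k) => h2; case: (ltnP j i) => h3;
  case: (leqP (i - j) k) => h4; case: (ltnP (j + k) i) => h5;
  case: (leqP (j + k - i) k.*2) => h6; case: (ltnP k (j + k - i)) => h7;
  case: (ltnP (j + k - i) k) => h8; rewrite /= //; lia.
Qed.

Section AmatKernel.

Variables (k c : nat).
Hypotheses (k_gt0 : (0 < k)%N) (c_gt0 : (0 < c)%N).

Let n := (c * k + c - k)%N.
Let g := gcdn c k.
Let K : {poly rat} := ker_poly k c.

Let g_gt0 : (0 < g)%N. Proof. by rewrite gcdn_gt0 c_gt0. Qed.

Let g_le_n : (g <= n)%N.
Proof. by apply: leq_trans (dvdn_leq c_gt0 (dvdn_gcdl c k)) _; rewrite /n; nia. Qed.

Let K_size : size K = (n - g.-1)%N. Proof. exact: size_ker_poly. Qed.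

Lemma mulmx_Amat_eq0 (u : 'rV_n) : (u *m Amat n k == 0) = (K %| rVpoly u).
Proof.
have u_size := size_rVpoly u.
rewrite -dvdp_geomXnS_mulE //; apply/eqP/idP => [uA0 | dvd_Su].
  apply: (toeplitz_window_dvdp c_gt0 u_size) => j lt_jn.
  by rewrite -(mulmx_Amat_coef _ u (Ordinal lt_jn)) uA0 mxE.
apply/rowP => j; rewrite mulmx_Amat_coef mxE.
exact: (dvdp_toeplitz_window c_gt0 u_size dvd_Su (ltn_ord j)).
Qed.

Definition ker_basis : 'M[rat]_(g, n) := \matrix_(r < g) poly_rV ('X^r * K).

Lemma mul_ker_basis (v : 'rV_g) : v *m ker_basis = poly_rV (rVpoly v * K).
Proof.
rewrite mulmx_sum_row {2}(row_sum_delta v) linear_sum mulr_suml linear_sum.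
by apply: eq_bigr => i _; rewrite rowK linearZ /= rVpoly_delta -scalerAl linearZ.
Qed.

Let size_rVpoly_mul_ker (v : 'rV_g) : (size (rVpoly v * K)%R <= n)%N.
Proof.
apply: leq_trans (size_polyMleq _ _) _; rewrite K_size.
by move: (size_rVpoly v); lia.
Qed.

Lemma sub_ker_basis (u : 'rV_n) : (u <= ker_basis)%MS = (K %| rVpoly u).
Proof.
apply/submxP/idP => [[v ->] | dvd_Ku].
  by rewrite mul_ker_basis poly_rV_K ?size_rVpoly_mul_ker // dvdp_mull.
exists (poly_rV (rVpoly u %/ K)).
have quot_size : (size (rVpoly u %/ K)%R <= g)%N.
  rewrite size_divp -?size_poly_eq0 K_size; last lia.
  have := size_rVpoly u; move: (size _) => s; clearbody n g; lia.
by rewrite mul_ker_basis poly_rV_K // divpK // rVpolyK.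
Qed.

Lemma ker_basis_free : row_free ker_basis.
Proof.
have K_neq0 : K != 0 by rewrite -size_poly_eq0 K_size; clearbody n g; lia.
apply: inj_row_free => v; rewrite mul_ker_basis => /(congr1 rVpoly).
rewrite poly_rV_K ?size_rVpoly_mul_ker // linear0 => /eqP.
rewrite mulf_eq0 (negbTE K_neq0) orbF => /eqP v0.
by rewrite -[v]rVpolyK v0 linear0.
Qed.

Lemma kermx_Amat : (kermx (Amat n k) == ker_basis)%MS.
Proof. by apply/rV_eqP => u; rewrite sub_kermx mulmx_Amat_eq0 sub_ker_basis. Qed.

Lemma nullity_Amat : N n k = g.
Proof. by rewrite /N -mxrank_ker (eqmx_rank kermx_Amat); apply/eqP; exact: ker_basis_free. Qed.

End AmatKernel.

Theorem theorem8p8 (k c : nat) (hc1 : (1 < c)%N) (hck : (c < k)%N) :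
  N (c * k + c - k) k = gcdn c k.
Proof. by apply: nullity_Amat; lia. Qed.
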